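(* For every positive integer $k$, $$\sum_{j=0}^{2k-1} (-1)^j \sin^2\left(\frac{(2j+1)\pi}{8k+2}\right) = \frac{-\sin^2\left(\frac{2k\pi}{4k+1}\right)}{2\cos\left(\frac{\pi}{4k+1}\right)}$$ and $$\sum_{j=0}^{2k} (-1)^j \sin^2\left(\frac{(2j+1)\pi}{8k+6}\right) = \frac{1}{2} - \frac{\cos^2\left(\frac{(2k+1)\pi}{4k+3}\right)}{2\cos\left(\frac{\pi}{4k+3}\right)}.$$ Consequently $$\lim_{k\to\infty}\sum_{j=0}^{2k-1} (-1)^j \sin^2\left(\frac{(2j+1)\pi}{8k+2}\right) = -\frac12 \quad\text{and}\quad \lim_{k\to\infty}\sum_{j=0}^{2k} (-1)^j \sin^2\left(\frac{(2j+1)\pi}{8k+6}\right) = \frac12.$$ *)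

From Stdlib Require Import Reals.
From Coquelicot Require Import Coquelicot.
Open Scope R_scope.

Definition S1 (k : nat) : R :=
  sum_n_m (fun j => (-1) ^ j * (sin ((2 * INR j + 1) * PI / (8 * INR k + 2))) ^ 2)
    0 (2 * k - 1).

Definition S2 (k : nat) : R :=
  sum_n_m (fun j => (-1) ^ j * (sin ((2 * INR j + 1) * PI / (8 * INR k + 6))) ^ 2)
    0 (2 * k).

(* Writing sin^2 x = (1 - cos 2x)/2, the alternating sum of sin^2((2j+1)t) splits into an
   alternating sum of ones and the alternating sum of cos((2j+1)u) with u = 2t.  Multiplying
   the latter by 2 cos u and using 2 cos u cos v = cos(v + u) + cos(v - u) makes it telescope.
   With u = pi/(4k+1), resp. u = pi/(4k+3), this gives the two closed forms; as k -> oo their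
   arguments tend to pi/2 and 0, whence the limits -1/2 and 1/2. *)
From Stdlib Require Import Reals Lra Lia.
From Coquelicot Require Import Coquelicot.
Open Scope R_scope.

Lemma alt_sum_cos_odd_mult (u : R) (m : nat) :
  2 * cos u * sum_f_R0 (fun j => (-1) ^ j * cos ((2 * INR j + 1) * u)) m
  = 1 + (-1) ^ m * cos (2 * INR (S m) * u).
Proof.
  induction m as [|m IH].
  - simpl.
    replace ((2 * 0 + 1) * u) with u by ring.
    replace (2 * 1 * u) with (2 * u) by ring.
    rewrite cos_2a_cos; ring.
  - set (v := (2 * INR (S m) + 1) * u).
    assert (Hprod : 2 * cos u * cos v
                    = cos (2 * INR (S (S m)) * u) + cos (2 * INR (S m) * u)).
    { replace (2 * INR (S (S m)) * u) with (v + u) by (unfold v; rewrite (S_INR (S m)); ring).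
      replace (2 * INR (S m) * u) with (v - u) by (unfold v; ring).
      rewrite cos_plus, cos_minus; ring. }
    rewrite tech5, Rmult_plus_distr_l, IH.
    simpl pow. fold v.
    replace (2 * cos u * (-1 * (-1) ^ m * cos v))
      with (- (-1) ^ m * (2 * cos u * cos v)) by ring.
    rewrite Hprod; ring.
Qed.

Lemma alt_sum_sin_sqr_odd_mult (t : R) (m : nat) :
  4 * cos (2 * t) * sum_f_R0 (fun j => (-1) ^ j * sin ((2 * INR j + 1) * t) ^ 2) m
  = cos (2 * t) * (1 + (-1) ^ m) - (1 + (-1) ^ m * cos (2 * INR (S m) * (2 * t))).
Proof.
  rewrite (tech11 _ (fun j => (-1) ^ j * / 2)
             (fun j => (-1) ^ j * cos ((2 * INR j + 1) * (2 * t)) * / 2)).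
  2:{ intro j.
      replace ((2 * INR j + 1) * (2 * t)) with (2 * ((2 * INR j + 1) * t)) by ring.
      rewrite cos_2a_sin; field. }
  (* [tech3] is the finite geometric sum, here of ratio -1. *)
  rewrite <- !scal_sum, tech3 by lra.
  pose proof (alt_sum_cos_odd_mult (2 * t) m) as Hcos.
  simpl pow in *.
  set (c := cos (2 * t)) in *.
  set (sc := sum_f_R0 _ m) in *.
  field_simplify; lra.
Qed.

Lemma alt_sum_sin_sqr_upto_odd (t : R) (k : nat) : cos (2 * t) <> 0 ->
  sum_f_R0 (fun j => (-1) ^ j * sin ((2 * INR j + 1) * t) ^ 2) (S (2 * k))
  = - sin (2 * INR (S k) * (2 * t)) ^ 2 / (2 * cos (2 * t)).
Proof.
  intros Hc.
  pose proof (alt_sum_sin_sqr_odd_mult t (S (2 * k))) as E.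
  rewrite pow_1_odd in E.
  replace (2 * INR (S (S (2 * k))) * (2 * t))
    with (2 * (2 * INR (S k) * (2 * t))) in E by (rewrite !S_INR, mult_INR; simpl; ring).
  rewrite (cos_2a_sin (2 * INR (S k) * (2 * t))) in E.
  apply (Rmult_eq_reg_l (4 * cos (2 * t))); [rewrite E; field; exact Hc | lra].
Qed.

Lemma alt_sum_sin_sqr_upto_even (t : R) (k : nat) : cos (2 * t) <> 0 ->
  sum_f_R0 (fun j => (-1) ^ j * sin ((2 * INR j + 1) * t) ^ 2) (2 * k)
  = 1 / 2 - cos ((2 * INR k + 1) * (2 * t)) ^ 2 / (2 * cos (2 * t)).
Proof.
  intros Hc.
  pose proof (alt_sum_sin_sqr_odd_mult t (2 * k)) as E.
  rewrite pow_1_even in E.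
  replace (2 * INR (S (2 * k)) * (2 * t))
    with (2 * ((2 * INR k + 1) * (2 * t))) in E by (rewrite S_INR, mult_INR; simpl; ring).
  rewrite (cos_2a_cos ((2 * INR k + 1) * (2 * t))) in E.
  apply (Rmult_eq_reg_l (4 * cos (2 * t))); [rewrite E; field; exact Hc | lra].
Qed.

Lemma cos_PI_div_gt0 (D : R) : 2 < D -> 0 < cos (PI / D).
Proof.
  intros HD. pose proof PI_RGT_0.
  apply cos_gt_0.
  - assert (0 < PI / D) by (apply Rdiv_lt_0_compat; lra). lra.
  - apply (Rmult_lt_reg_r D); [lra |].
    unfold Rdiv. rewrite Rmult_assoc, Rinv_l by lra. nra.
Qed.

Lemma sum_n_m_alt_sin_sqr_pi_div (D : R) (m : nat) :
  sum_n_m (fun j => (-1) ^ j * sin ((2 * INR j + 1) * PI / D) ^ 2) 0 m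
  = sum_f_R0 (fun j => (-1) ^ j * sin ((2 * INR j + 1) * (PI / D)) ^ 2) m.
Proof.
  change (sum_n_m ?f 0 m) with (sum_n f m).
  rewrite (sum_n_Reals (fun j => (-1) ^ j * sin ((2 * INR j + 1) * PI / D) ^ 2)).
  apply sum_eq. intros j _. unfold Rdiv. rewrite Rmult_assoc. reflexivity.
Qed.

Lemma S1_closed_form (k : nat) : (1 <= k)%nat ->
  S1 k = - (sin (2 * INR k * PI / (4 * INR k + 1))) ^ 2
           / (2 * cos (PI / (4 * INR k + 1))).
Proof.
  intros Hk. destruct k as [|k]; [lia |].
  assert (HK : 1 <= INR (S k)) by (rewrite S_INR; pose proof (pos_INR k); lra).
  assert (Hu : 2 * (PI / (8 * INR (S k) + 2)) = PI / (4 * INR (S k) + 1))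
    by (field; lra).
  unfold S1. rewrite sum_n_m_alt_sin_sqr_pi_div.
  replace (2 * S k - 1)%nat with (S (2 * k)) by lia.
  rewrite alt_sum_sin_sqr_upto_odd, Hu.
  - do 4 f_equal. unfold Rdiv. ring.
  - rewrite Hu. apply Rgt_not_eq, cos_PI_div_gt0. lra.
Qed.

Lemma S2_closed_form (k : nat) :
  S2 k = 1 / 2 - (cos ((2 * INR k + 1) * PI / (4 * INR k + 3))) ^ 2
                   / (2 * cos (PI / (4 * INR k + 3))).
Proof.
  pose proof (pos_INR k) as Hk0.
  assert (Hu : 2 * (PI / (8 * INR k + 6)) = PI / (4 * INR k + 3)) by (field; lra).
  unfold S2. rewrite sum_n_m_alt_sin_sqr_pi_div, alt_sum_sin_sqr_upto_even, Hu.
  - do 4 f_equal. unfold Rdiv. ring.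
  - rewrite Hu. apply Rgt_not_eq, cos_PI_div_gt0. lra.
Qed.

Lemma is_lim_seq_continuous_inv (f : R -> R) (u : nat -> R) (l : R) :
  continuity_pt f 0 -> f 0 = l ->
  (forall k, (1 <= k)%nat -> u k = f (/ INR k)) -> is_lim_seq u l.
Proof.
  intros Hf Hl Hu. subst l.
  apply (is_lim_seq_ext_loc (fun k => f (/ INR k))).
  - exists 1%nat. intros k Hk. symmetry. exact (Hu k Hk).
  - apply is_lim_seq_continuous; [exact Hf |].
    change (Finite 0) with (Rbar_inv p_infty).
    apply is_lim_seq_inv; [exact is_lim_seq_INR | discriminate].
Qed.

Lemma continuity_pt_ex_derive (f : R -> R) (x : R) : ex_derive f x -> continuity_pt f x.
Proof.
  intros Hf. apply continuity_pt_filterlim.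
  exact (@ex_derive_continuous R_AbsRing R_NormedModule f x Hf).
Qed.

Lemma S1_lim : is_lim_seq S1 (- (1 / 2)).
Proof.
  apply (is_lim_seq_continuous_inv
           (fun x => - sin (2 * PI / (4 + x)) ^ 2 / (2 * cos (PI * x / (4 + x))))).
  - apply continuity_pt_ex_derive.
    auto_derive. repeat split; try lra.
    replace (PI * 0 * / (4 + 0)) with 0 by field. rewrite cos_0. lra.
  - replace (2 * PI / (4 + 0)) with (PI / 2) by field.
    replace (PI * 0 / (4 + 0)) with 0 by field.
    rewrite sin_PI2, cos_0. field.
  - intros k Hk. rewrite S1_closed_form by exact Hk.
    assert (0 < INR k) by (apply lt_0_INR; lia).
    f_equal; [do 3 f_equal | do 2 f_equal]; field; lra.
Qed.

Lemma S2_lim : is_lim_seq S2 (1 / 2).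
Proof.
  apply (is_lim_seq_continuous_inv
           (fun x => 1 / 2 - cos ((2 + x) * PI / (4 + 3 * x)) ^ 2
                             / (2 * cos (PI * x / (4 + 3 * x))))).
  - apply continuity_pt_ex_derive.
    auto_derive. repeat split; try lra.
    replace (PI * 0 * / (4 + 3 * 0)) with 0 by field. rewrite cos_0. lra.
  - replace ((2 + 0) * PI / (4 + 3 * 0)) with (PI / 2) by field.
    replace (PI * 0 / (4 + 3 * 0)) with 0 by field.
    rewrite cos_PI2, cos_0. field.
  - intros k Hk. rewrite S2_closed_form.
    assert (0 < INR k) by (apply lt_0_INR; lia).
    do 2 f_equal; [do 2 f_equal | do 2 f_equal]; field; lra.
Qed.

Theorem proposition4 :
  (forall k : nat, (1 <= k)%nat ->
     S1 k = - (sin (2 * INR k * PI / (4 * INR k + 1))) ^ 2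
              / (2 * cos (PI / (4 * INR k + 1)))
  /\ S2 k = 1 / 2 - (cos ((2 * INR k + 1) * PI / (4 * INR k + 3))) ^ 2
              / (2 * cos (PI / (4 * INR k + 3))))
  /\ is_lim_seq S1 (- (1 / 2))
  /\ is_lim_seq S2 (1 / 2).
Proof.
  split; [| exact (conj S1_lim S2_lim)].
  intros k Hk. exact (conj (S1_closed_form k Hk) (S2_closed_form k)).
Qed.
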